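(* Let $p$ be an odd prime, $k\in\{-1,1\}$ and $q$ a positive integer. For every Legendre graph $L_{qp}^k(f,p)$ of order $qp$, the minimum degree is $\delta(L_{qp}^k(f,p))=q\frac{p-1}{2}-1$ and the maximum degree is $\Delta(L_{qp}^k(f,p))=q\frac{p-1}{2}$.
   Context: For an odd prime $p$ and an integer $a$ not divisible by $p$, $(a/p)$ denotes the Legendre symbol: $1$ if $a$ is a quadratic residue mod $p$, $-1$ otherwise. For $k\in\{-1,1\}$, a Legendre graph $L_n^k(f,p)$ of order $n$ is a simple graph on an $n$-element vertex set $V$ together with a bijection $f:V\to\{1,2,\dots,n\}$, whose edges are exactly the pairs $\{a,b\}$ of distinct vertices with $p\nmid f(a)+f(b)$ and $((f(a)+f(b))/p)=k$. *)

From mathcomp Require Import all_boot all_order all_algebra.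
Set Implicit Arguments. Unset Strict Implicit. Unset Printing Implicit Defensive.

(* Legendre symbol (a/p) for an odd prime p and p not dividing a:
   1 if a is a quadratic residue mod p, -1 otherwise. (Only used when ~~ (p %| a).) *)
Definition is_qr (a p : nat) : bool := [exists x : 'I_p, (x * x) %% p == a %% p].
Definition legendre (a p : nat) : int := if is_qr a p then 1%R else (-1)%R.

Definition legendre_adj (T : finType) (f : T -> nat) (p : nat) (k : int) : rel T :=
  fun a b => [&& a != b, ~~ (p %| f a + f b) & legendre (f a + f b) p == k].

Definition is_labelling (T : finType) (n : nat) (f : T -> nat) : Prop :=
  #|T| = n /\ injective f /\ (forall v, 1 <= f v <= n).

Definition degree (T : finType) (e : rel T) (v : T) : nat := #|[set w | e v w]|.

Definition is_min_degree (T : finType) (e : rel T) (d : nat) : Prop :=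
  (exists v, degree e v = d) /\ (forall v, d <= degree e v).
Definition is_max_degree (T : finType) (e : rel T) (d : nat) : Prop :=
  (exists v, degree e v = d) /\ (forall v, degree e v <= d).

From mathcomp Require Import all_boot all_order all_algebra zify.

Set Implicit Arguments.
Unset Strict Implicit.
Unset Printing Implicit Defensive.

(* Adjacency of [v] and [w] depends only on the residue [(f v + f w) %% p], which has
   to be a nonzero residue with Legendre symbol [k]; there are (p-1)/2 such residues,
   because the nonzero squares mod p are exactly the [x^2] with [1 <= x <= (p-1)/2].
   As [f w] runs through [1..qp], the residue [(f v + f w) %% p] takes every value
   exactly q times, so [v] has q(p-1)/2 neighbours, minus one precisely when the
   excluded loop [w = v] would qualify, i.e. when [2 f v] falls in that class. As 2 is
   invertible mod p both cases occur: the label [p] realises the maximum, a label [a]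
   with [2 a] in the class the minimum. *)

Lemma count_iota_periodic (P : pred nat) p m q :
  (forall b, P (b + p) = P b) -> count P (iota m (q * p)) = q * count P (iota 0 p).
Proof.
move=> P_per.
have count_period m' : count P (iota m' p) = count P (iota 0 p).
  elim: m' => // m' IH; rewrite -IH.
  case: p P_per {IH} => // p P_per.
  rewrite -[p.+1]addn1 iotaD count_cat [in RHS]addn1 /= addSnnS P_per; lia.
elim: q m => // q IH m.
by rewrite mulSn iotaD count_cat IH count_period mulSn.
Qed.

Lemma count_iota_addn_mod (G : pred nat) p a m q : 0 < p ->
  count (fun b => G ((a + b) %% p)) (iota m (q * p)) = q * count G (iota 0 p).
Proof.
move=> p_gt0; rewrite count_iota_periodic => [|b]; last by rewrite addnA modnDr.
congr (q * _).
have shift_start : count (fun b => G ((a + b) %% p)) (iota 0 p) =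
    count (fun b => G (b %% p)) (iota a p).
  by rewrite -{2}[a]addn0 iotaDl count_map.
rewrite shift_start -[p in iota a p]mul1n count_iota_periodic => [|b]; last first.
  by rewrite /= modnDr.
rewrite mul1n; apply: eq_in_count => r; rewrite mem_iota add0n => r_lt /=.
by rewrite modn_small.
Qed.

Lemma odd_half_subn1 n : odd n -> n = 2 * ((n - 1) %/ 2) + 1.
Proof.
move=> n_odd; have := odd_double_half n; rewrite n_odd -muln2 /=.
case: n n_odd => // n _ <-; rewrite subn1 /= mulnK //; lia.
Qed.

Lemma odd_double_mod_surj p r : odd p -> r < p ->
  exists2 a, 0 < a <= p & (a + a) %% p = r.
Proof.
move=> p_odd r_lt; have p_eq := odd_half_subn1 p_odd.
case: (posnP r) => [->|r_gt0]; first by exists p; rewrite ?modnDl ?modnn //; lia.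
have := odd_double_half r; rewrite -muln2; case: (odd r) => /= r_eq.
  exists (r./2 + (p - 1) %/ 2 + 1); first lia.
  have -> : r./2 + (p - 1) %/ 2 + 1 + (r./2 + (p - 1) %/ 2 + 1) = r + p by lia.
  by rewrite modnDr modn_small.
by exists r./2; [lia | rewrite modn_small; lia].
Qed.

Definition legendre_class (p : nat) (k : int) (r : nat) : bool :=
  (r != 0) && (legendre r p == k).

Section SquaresModPrime.

Variable p : nat.
Hypotheses (p_prime : prime p) (p_odd : odd p).
Local Notation h := ((p - 1) %/ 2).

Lemma sqr_mod_inj : {in iota 1 h &, injective (fun x => x * x %% p)}.
Proof.
have p_eq := odd_half_subn1 p_odd.
suff sqr_le_inj x y : x \in iota 1 h -> y \in iota 1 h -> x <= y ->
    x * x %% p = y * y %% p -> x = y.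
  move=> x y x_in y_in; case: (leqP x y) => [|/ltnW]; first exact: sqr_le_inj.
  by move=> yx /esym /(sqr_le_inj _ _ y_in x_in yx) ->.
rewrite !mem_iota => /andP[x_gt0 x_le] /andP[_ y_le] xy /eqP.
rewrite eq_sym eqn_mod_dvd ?leq_mul //.
have -> : y * y - x * x = (y - x) * (y + x) by rewrite mulnBl !mulnDr; lia.
rewrite Euclid_dvdM // [p %| y + x]gtnNdvd ?orbF; try lia.
by case: (posnP (y - x)) => [|? /dvdn_leq]; lia.
Qed.

Lemma is_qr_sqr_mod r : 0 < r < p ->
  is_qr r p = (r \in [seq x * x %% p | x <- iota 1 h]).
Proof.
have p_eq := odd_half_subn1 p_odd.
move=> /andP[r_gt0 r_lt]; apply/existsP/mapP => [[x /eqP]|[x]].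
  rewrite (modn_small r_lt) => r_eq.
  have x_gt0 : 0 < x.
    by case: (posnP x) => // x0; rewrite -r_eq x0 mod0n in r_gt0.
  have x_lt := ltn_ord x.
  case: (leqP x h) => x_le.
    by exists (x : nat); rewrite // mem_iota; lia.
  exists (p - x); first by rewrite mem_iota; lia.
  rewrite -r_eq; have -> : x * x = (2 * x - p) * p + (p - x) * (p - x) by nia.
  by rewrite modnMDl.
rewrite mem_iota => /andP[x_gt0 x_le] ->.
have x_lt : x < p by lia.
by exists (Ordinal x_lt); rewrite /= modn_mod.
Qed.

Lemma count_nonzero_qr :
  count (fun r => (r != 0) && is_qr r p) (iota 0 p) = h.
Proof.
have p_eq := odd_half_subn1 p_odd.
rewrite -size_filter -(size_iota 1 h) -(size_map (fun x => x * x %% p)).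
apply: perm_size; apply: uniq_perm.
- by rewrite filter_uniq ?iota_uniq.
- by rewrite (map_inj_in_uniq sqr_mod_inj) iota_uniq.
move=> r; rewrite mem_filter mem_iota add0n -lt0n /=.
apply/idP/idP => [/andP[/andP[r_gt0 r_qr] r_lt] | r_sqr].
  have r_range : 0 < r < p by rewrite r_gt0.
  by rewrite -(is_qr_sqr_mod r_range).
have r_range : 0 < r < p.
  have [x] := mapP r_sqr; rewrite mem_iota => /andP[x_gt0 x_le] ->.
  rewrite ltn_pmod ?andbT; last lia.
  rewrite lt0n -/(dvdn p _) Euclid_dvdM // orbb gtnNdvd //; lia.
by rewrite (is_qr_sqr_mod r_range) r_sqr andbT.
Qed.

Lemma count_legendre_class k : k = 1%R \/ k = (-1)%R ->
  count (legendre_class p k) (iota 0 p) = h.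
Proof.
have p_eq := odd_half_subn1 p_odd.
case=> ->.
  rewrite -count_nonzero_qr.
  by apply: eq_count => r; rewrite /legendre_class /legendre; case: is_qr.
have count_nonzero : count (predC1 0) (iota 0 p) = p - 1.
  have -> : iota 0 p = 0 :: iota 1 (p - 1).
    by rewrite -{1}(subnK (prime_gt0 p_prime)) addn1.
  rewrite /= (eq_in_count (a2 := predT)) ?count_predT ?size_iota // => r.
  by rewrite mem_iota /= -lt0n => /andP[].
have := count_predC [pred r | is_qr r p] [seq r <- iota 0 p | r != 0].
rewrite !count_filter size_filter count_nonzero.
rewrite (eq_count (a2 := fun r => (r != 0) && is_qr r p)) => [|r]; last first.
  by rewrite /= andbC.
rewrite count_nonzero_qr (eq_count (a2 := legendre_class p (-1))) => [|r]; last first.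
  by rewrite /legendre_class /legendre /= andbC; case: is_qr.
lia.
Qed.

End SquaresModPrime.

Lemma card_set_count (T : finType) (P : pred T) : #|[set w | P w]| = count P (enum T).
Proof. by rewrite cardsE cardE -size_filter enumT /enum_mem. Qed.

Section Labelling.

Variables (T : finType) (f : T -> nat).

Lemma labelling_perm_iota n : is_labelling n f -> perm_eq (map f (enum T)) (iota 1 n).
Proof.
move=> [card_T [f_inj f_range]].
have f_uniq : uniq (map f (enum T)) by rewrite map_inj_uniq ?enum_uniq.
apply: uniq_perm => //; first exact: iota_uniq.
apply: (uniq_min_size f_uniq _ _).2 => [_ /mapP[w _ ->]|].
  by rewrite mem_iota; have := f_range w; lia.
by rewrite size_map size_iota -card_T cardE.
Qed.

Lemma labelling_surj n b : is_labelling n f -> 1 <= b <= n -> exists w, f w = b.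
Proof.
move=> /labelling_perm_iota f_perm b_range.
have : b \in map f (enum T) by rewrite (perm_mem f_perm) mem_iota; lia.
by move=> /mapP[w _ ->]; exists w.
Qed.

Lemma legendre_adjE p k v w : injective f ->
  legendre_adj f p k v w = (f w != f v) && legendre_class p k ((f v + f w) %% p).
Proof.
move=> f_inj; rewrite /legendre_adj (inj_eq f_inj) eq_sym /legendre_class /dvdn.
by rewrite /legendre /is_qr modn_mod.
Qed.

Lemma degree_legendre_adj p q k v : 0 < p -> is_labelling (q * p) f ->
  degree (legendre_adj f p k) v + legendre_class p k ((f v + f v) %% p) =
  q * count (legendre_class p k) (iota 0 p).
Proof.
move=> p_gt0 f_lab; have [_ [f_inj f_range]] := f_lab.
pose nbr b := legendre_class p k ((f v + b) %% p).
have fv_in : f v \in iota 1 (q * p) by rewrite mem_iota; have := f_range v; lia.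
rewrite /degree card_set_count (eq_count (fun w => legendre_adjE p k v w f_inj)).
rewrite -(count_map f (fun b => (b != f v) && nbr b)) (permP (labelling_perm_iota f_lab)).
rewrite -(count_iota_addn_mod _ (f v) 1 q p_gt0) -/nbr.
rewrite [in RHS](permP (perm_to_rem fv_in)) /= rem_filter ?iota_uniq // count_filter.
by rewrite addnC; congr (_ + _); apply: eq_count => b; rewrite /= andbC.
Qed.

End Labelling.

Theorem mainTheorem4 (p q : nat) (k : int) (T : finType) (f : T -> nat) :
  prime p -> odd p -> (k = 1%R \/ k = (-1)%R) -> 0 < q ->
  is_labelling (q * p) f ->
  is_min_degree (legendre_adj f p k) (q * ((p - 1) %/ 2) - 1) /\
  is_max_degree (legendre_adj f p k) (q * ((p - 1) %/ 2)).
Proof.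
move=> p_prime p_odd k_sign q_gt0 f_lab.
have p_eq := odd_half_subn1 p_odd.
have p_gt1 := prime_gt1 p_prime.
have degE v := degree_legendre_adj k v (prime_gt0 p_prime) f_lab.
rewrite count_legendre_class // in degE.
have label_in a : 0 < a <= p -> exists w, f w = a.
  by move=> a_range; apply: labelling_surj f_lab _; nia.
split; split=> [|v]; try by have := degE v; lia.
- have : has (legendre_class p k) (iota 0 p) by rewrite has_count count_legendre_class //; lia.
  case/hasP=> r; rewrite mem_iota add0n => /andP[_ r_lt] r_class.
  have [a a_range a_double] := odd_double_mod_surj p_odd r_lt.
  have [w f_w] := label_in a a_range.
  by exists w; have := degE w; rewrite f_w a_double r_class; lia.
- have [w f_w] : exists w, f w = p by apply: label_in; lia.
  exists w; have := degE w.
  by rewrite f_w modnDl modnn /legendre_class eqxx /=; lia.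
Qed.
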